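(* Let $G$ be a finitely generated abelian group, written as $G=D\times\mathbb{Z}^n$ with $D$ finite and $n\geq1$. For $d\in\mathbb{N}$ let $a_d$ be the number of subgroups of index $d$ in $D$. Then for every $m\geq1$ the number of subgroups of index $m$ in $G$ equals $$\sum_{d_1\mid d_2\mid\cdots\mid d_n\mid m}a_{d_1}d_1d_2\cdots d_n,$$ the sum running over all chains of positive integers $d_1,\dots,d_n$ with $d_1\mid d_2$, \dots, $d_{n-1}\mid d_n$, $d_n\mid m$. *)

From mathcomp Require Import all_boot all_order all_algebra.
Set Implicit Arguments. Unset Strict Implicit. Unset Printing Implicit Defensive.
Import GRing.Theory.
Local Open Scope ring_scope.

Definition is_subgroup (V : zmodType) (H : V -> Prop) : Prop :=
  H 0 /\ (forall x y, H x -> H y -> H (x - y)).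

Definition has_index (V : zmodType) (H : V -> Prop) (m : nat) : Prop :=
  exists g : 'I_m -> V, forall x, exists! i : 'I_m, H (x - g i).

(* The number of subsets H of V satisfying P is N: the family of such
   subsets is in bijection with 'I_N (subsets compared extensionally). *)
Definition num_sets (V : Type) (P : (V -> Prop) -> Prop) (N : nat) : Prop :=
  exists f : 'I_N -> (V -> Prop),
    injective f /\ (forall H, P H <-> exists i, f i = H).

Definition num_subgroups_of_index (V : zmodType) (m N : nat) : Prop :=
  num_sets (fun H : V -> Prop => is_subgroup H /\ has_index H m) N.

(* The chains d_1 | d_2 | ... | d_n | m of positive integers, encoded as
   functions t : 'I_n -> 'I_m.+1 (each d_i divides m >= 1, so d_i <= m). *)
Definition is_div_chain (n m : nat) (t : {ffun 'I_n -> 'I_m.+1}) : bool :=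
  let s := [seq nat_of_ord (t i) | i <- enum 'I_n] in
  all (fun d => 0 < d)%N s && sorted dvdn (rcons s m).

(* sum over chains d_1 | ... | d_n | m of a_{d_1} d_1 d_2 ... d_n
   (d_1 is the head of the chain; n >= 1 in the statement). *)
Definition chain_sum (a : nat -> nat) (n m : nat) : nat :=
  (\sum_(t : {ffun 'I_n -> 'I_m.+1} | is_div_chain t)
     a (head 0%N [seq nat_of_ord (t i) | i <- enum 'I_n]) *
     \prod_(i < n) nat_of_ord (t i))%N.

From mathcomp Require Import all_boot all_order all_algebra.
From mathcomp Require Import boolp.
Set Implicit Arguments. Unset Strict Implicit. Unset Printing Implicit Defensive.
Import GRing.Theory Num.Theory.

(* A subgroup H of finite index of V x Z is determined by its slice
   K = {v | (v, 0) \in H}, the least positive height e of its elements and one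
   element (w, e) of H: then H = (K x 0) + Z (w, e), and w matters only modulo K.
   If K has index d, H has index d e. Hence the subgroups of index m of V x Z
   correspond to the triples (d | m, K of index d in V, coset of K), so
   a_m(V x Z) = sum_(d | m) d a_d(V). Unfolding this recursion n times from
   V = D gives the sum over the divisor chains d_1 | ... | d_n | m. *)

Section FfunRcons.
Variables (T : finType) (n : nat).

Definition ffun_rcons (t : {ffun 'I_n -> T}) (x : T) : {ffun 'I_n.+1 -> T} :=
  [ffun i => if unlift ord_max i is Some j then t j else x].

Lemma ffun_rcons_max t x : ffun_rcons t x ord_max = x.
Proof. by rewrite ffunE unlift_none. Qed.

Lemma ffun_rcons_widen t x i : ffun_rcons t x (widen_ord (leqnSn n) i) = t i.
Proof.
have -> : widen_ord (leqnSn n) i = lift ord_max i by apply: ord_inj; rewrite lift_max.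
by rewrite ffunE liftK.
Qed.

Lemma map_ffun_rcons (U : Type) (f : T -> U) t x :
  [seq f (ffun_rcons t x i) | i <- enum 'I_n.+1] = rcons [seq f (t i) | i <- enum 'I_n] (f x).
Proof.
rewrite enum_ordSr map_rcons -map_comp ffun_rcons_max; congr rcons.
by apply: eq_map => i /=; rewrite ffun_rcons_widen.
Qed.

Lemma big_ffun_rcons (R : Type) (idx : R) (op : Monoid.com_law idx)
    (F : {ffun 'I_n.+1 -> T} -> R) :
  \big[op/idx]_(t : {ffun 'I_n.+1 -> T}) F t =
  \big[op/idx]_(x : T) \big[op/idx]_(t : {ffun 'I_n -> T}) F (ffun_rcons t x).
Proof.
pose split_last (t : {ffun 'I_n.+1 -> T}) := (t ord_max, [ffun j => t (lift ord_max j)]).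
have bij : bijective (fun p => ffun_rcons p.2 p.1).
  exists split_last => [[x t] | t] /=.
    rewrite /split_last ffun_rcons_max; congr pair.
    by apply/ffunP => j; rewrite !ffunE liftK.
  apply/ffunP => i; rewrite ffunE /=.
  by case: unliftP => [j ->|->]; rewrite ?ffunE.
by rewrite (reindex _ (onW_bij _ bij)) pair_bigA.
Qed.

End FfunRcons.

Section ChainSums.
Variable a : nat -> nat.

Fixpoint divisor_chain_sum (n m : nat) : nat :=
  if n is n'.+1 then \sum_(d < m.+1 | d %| m) d * divisor_chain_sum n' d else a m.

Definition ord_seq n B (t : {ffun 'I_n -> 'I_B}) : seq nat :=
  [seq nat_of_ord (t i) | i <- enum 'I_n].

(* The bound [B] on the entries stays fixed while the recursion on [n] changes
   [m]; the head defaults to [m], so that the empty chain contributes [a m]. *)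
Definition bounded_chain_sum n B m : nat :=
  \sum_(t : {ffun 'I_n -> 'I_B} |
          all (fun d => 0 < d) (ord_seq t) && sorted dvdn (rcons (ord_seq t) m))
     a (head m (ord_seq t)) * \prod_(i < n) nat_of_ord (t i).

Lemma bounded_chain_sum0 B m : bounded_chain_sum 0 B m = a m.
Proof.
rewrite /bounded_chain_sum /ord_seq enum_ord0.
rewrite (eq_bigr (fun _ => a m)) => [|t _]; last by rewrite big_ord0 muln1.
by rewrite sum_nat_const card_ffun !card_ord expn0 mul1n.
Qed.

Lemma sorted_rcons_rcons (T : Type) (r : rel T) s x y :
  sorted r (rcons (rcons s x) y) = sorted r (rcons s x) && r x y.
Proof. by case: s => [|h s] /=; rewrite ?andbT // rcons_path last_rcons. Qed.

Lemma bounded_chain_sumS n B m :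
  bounded_chain_sum n.+1 B m =
  \sum_(x : 'I_B | (0 < x) && (x %| m)) x * bounded_chain_sum n B x.
Proof.
rewrite /bounded_chain_sum big_mkcond big_ffun_rcons [RHS]big_mkcond.
apply: eq_bigr => x _; case: (boolP ((0 < x) && (x %| m))) => [x_chain | x_not_chain].
  rewrite big_distrr [RHS]big_mkcond; apply: eq_bigr => t _ /=.
  rewrite /ord_seq map_ffun_rcons all_rcons sorted_rcons_rcons.
  case/andP: x_chain => -> ->; rewrite andbT; case: ifP => // _.
  rewrite big_ord_recr /= ffun_rcons_max.
  under eq_bigr do rewrite ffun_rcons_widen.
  by rewrite headI /= mulnA [LHS]mulnC.
rewrite big1 // => t _.
rewrite /ord_seq map_ffun_rcons all_rcons sorted_rcons_rcons.
by case: ifP => // /andP [/andP [x_gt0 _] /andP [_ x_dvd]]; rewrite x_gt0 x_dvd in x_not_chain.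
Qed.

Lemma bounded_chain_sumE n B m :
  0 < m -> m < B -> bounded_chain_sum n B m = divisor_chain_sum n m.
Proof.
elim: n m => [|n IH] m m_gt0 m_lt_B; first exact: bounded_chain_sum0.
rewrite bounded_chain_sumS /=.
rewrite (big_ord_widen_cond _ (fun d => d %| m) (fun d => d * divisor_chain_sum n d) m_lt_B).
apply: eq_big => [d | d /andP [d_gt0 d_dvd]]; last first.
  by rewrite IH // (leq_ltn_trans (dvdn_leq m_gt0 d_dvd)).
case: (posnP d) => [-> | d_gt0] /=; first by rewrite dvd0n eqn0Ngt m_gt0.
by case d_dvd: (d %| m); rewrite ?andbF // ltnS dvdn_leq.
Qed.

Lemma chain_sumE n m :
  0 < n -> 0 < m -> chain_sum a n m = divisor_chain_sum n m.
Proof.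
case: n => // n _ m_gt0; rewrite -(bounded_chain_sumE _ m_gt0 (ltnSn m)).
by apply: eq_bigr => t _; rewrite /ord_seq enum_ordSl.
Qed.

End ChainSums.

Section Counting.
Variable W : Type.

Lemma eq_num_sets (P Q : (W -> Prop) -> Prop) N :
  (forall H, P H <-> Q H) -> num_sets P N -> num_sets Q N.
Proof. by move=> PQ [f [f_inj fP]]; exists f; split => // H; rewrite -PQ. Qed.

Lemma num_sets_empty (P : (W -> Prop) -> Prop) : (forall H, ~ P H) -> num_sets P 0.
Proof.
move=> P0; exists (fun _ _ => False); split => [[] // | H].
by split => [/P0 [] | [[]]].
Qed.

Lemma num_sets_card (P : (W -> Prop) -> Prop) (T : finType) (F : T -> W -> Prop) :
  injective F -> (forall H, P H <-> exists t, F t = H) -> num_sets P #|T|.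
Proof.
move=> F_inj FP; exists (fun i => F (enum_val i)).
split => [i j /F_inj /enum_val_inj // | H].
rewrite FP; split => [[t <-] | [i <-]]; last by exists (enum_val i).
by exists (enum_rank t); rewrite enum_rankK.
Qed.

Lemma num_sets_sigma (I : finType) (P : I -> (W -> Prop) -> Prop) (c : I -> nat) :
  (forall i, num_sets (P i) (c i)) -> (forall i j H, P i H -> P j H -> i = j) ->
  num_sets (fun H => exists i, P i H) (\sum_i c i).
Proof.
move=> countP P_disj; pose f i := sval (cid (countP i)).
have fP i : injective (f i) /\ forall H, P i H <-> exists k, f i k = H := svalP (cid (countP i)).
have fPi i k : P i (f i k) by apply/(proj2 (fP i)); exists k.
have -> : \sum_i c i = #|{: {i : I & 'I_(c i)}}|.
  by rewrite card_tagged sumnE big_map big_enum; under [RHS]eq_bigr do rewrite card_ord.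
apply: (@num_sets_card _ _ (fun t => f (tag t) (tagged t))).
  move=> [i k] [j l] /= eq_f.
  have eq_ij : i = j by apply: (P_disj _ _ _ (fPi i k)); rewrite eq_f; apply: fPi.
  by subst j; move: eq_f => /(proj1 (fP i)) ->.
move=> H; split => [[i /(proj2 (fP i)) [k <-]] | [[i k] <-]]; last by exists i; apply: fPi.
by exists (Tagged (fun i => 'I_(c i)) k).
Qed.

Lemma num_sets_bigcup (U : Type) (Q : (U -> Prop) -> Prop)
    (R : (U -> Prop) -> (W -> Prop) -> Prop) N c :
  num_sets Q N -> (forall K, Q K -> num_sets (R K) c) ->
  (forall K K' H, Q K -> Q K' -> R K H -> R K' H -> K = K') ->
  num_sets (fun H => exists2 K, Q K & R K H) (N * c).
Proof.
move=> [f [f_inj fQ]] countR R_disj; have fQi i : Q (f i) by apply/fQ; exists i.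
have := @num_sets_sigma _ (fun i => R (f i)) (fun=> c) (fun i => countR _ (fQi i)).
rewrite sum_nat_const card_ord => count_union.
apply: (eq_num_sets _ (count_union _)) => [H | i j H Ri Rj].
  by split => [[i Ri] | [K /fQ [i <-] Ri]]; [exists (f i) | exists i].
by apply: f_inj; apply: (R_disj _ _ H (fQi i) (fQi j)).
Qed.

End Counting.

Local Open Scope ring_scope.

Section Subgroup.
Variables (V : zmodType) (H : V -> Prop).
Hypothesis subH : is_subgroup H.

Lemma subgroup0 : H 0. Proof. by case: subH. Qed.

Lemma subgroupB x y : H x -> H y -> H (x - y). Proof. by case: subH => _; apply. Qed.

Lemma subgroupN x : H x -> H (- x).
Proof. by move=> Hx; rewrite -sub0r; apply: subgroupB => //; apply: subgroup0. Qed.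

Lemma subgroupD x y : H x -> H y -> H (x + y).
Proof. by move=> Hx Hy; rewrite -[y]opprK; apply/subgroupB/subgroupN. Qed.

Lemma subgroupMz x z : H x -> H (x *~ z).
Proof.
move=> Hx; have subgroupMn n : H (x *+ n).
  elim: n => [|n IHn]; first by rewrite mulr0n; apply: subgroup0.
  by rewrite mulrS; apply: subgroupD.
by case: z => n; rewrite ?NegzE ?mulrNz; [|apply: subgroupN]; apply: subgroupMn.
Qed.

Definition classifies (T : Type) (c : V -> T) := forall x y, c x = c y <-> H (x - y).

Lemma coset_reps_inj m (g : 'I_m -> V) :
  (forall x, exists! i, H (x - g i)) -> forall i j, H (g i - g j) -> i = j.
Proof.
move=> gP i j Hij; have [k [_ k_uniq]] := gP (g i).
by rewrite -(k_uniq i) ?(k_uniq j) // subrr; apply: subgroup0.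
Qed.

Lemma coset_classifier m (g : 'I_m -> V) :
  (forall x, exists! i, H (x - g i)) -> exists c : V -> 'I_m, classifies c /\ cancel g c.
Proof.
move=> /choice [c cP]; exists c.
have c_uniq x i : H (x - g i) -> c x = i by move/(proj2 (cP x)).
split => [x y | i]; last by apply: c_uniq; rewrite subrr; apply: subgroup0.
split => [cxy | Hxy].
  by have := subgroupB (proj1 (cP x)) (proj1 (cP y)); rewrite cxy opprB addrA subrK.
by apply: c_uniq; have := subgroupD Hxy (proj1 (cP y)); rewrite addrA subrK.
Qed.

Lemma classifier_has_index (T : finType) (c : V -> T) :
  classifies c -> has_index H #|[set t | `[< exists x, c x = t >]]|.
Proof.
set S := [set t | _] => cH.
have /choice [g gP] : forall i : 'I_#|S|, exists x, c x = enum_val i.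
  by move=> i; have := enum_valP i; rewrite inE => /asboolP.
exists g => x; have Sx : c x \in S by rewrite inE; apply/asboolP; exists x.
exists (enum_rank_in Sx (c x)); split => [|i /cH].
  by apply/cH; rewrite gP enum_rankK_in.
by rewrite gP => cx; apply: enum_val_inj; rewrite enum_rankK_in.
Qed.

Lemma index_unique a b : has_index H a -> has_index H b -> a = b.
Proof.
suff le_index p q : has_index H p -> has_index H q -> (p <= q)%N.
  by move=> Ha Hb; apply/eqP; rewrite eqn_leq (le_index a b) ?(le_index b a).
move=> [g gP] [h /coset_classifier [c [cH _]]].
have c_g_inj : injective (c \o g).
  by move=> i j /cH; apply: coset_reps_inj gP i j.
by have := leq_card _ c_g_inj; rewrite !card_ord.
Qed.

End Subgroup.

Lemma has_index0 (V : zmodType) (H : V -> Prop) : ~ has_index H 0.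
Proof. by case=> g /(_ 0) [[]]. Qed.

Section Preimage.
Variables (U W : zmodType) (phi : U -> W) (K : W -> Prop).
Hypothesis phiB : {morph phi : x y / x - y}.

Lemma subgroup_preimage : is_subgroup K -> is_subgroup (fun x => K (phi x)).
Proof.
move=> subK; split => [|x y Kx Ky]; last by rewrite phiB; apply: subgroupB.
by rewrite -(subrr 0) phiB subrr; apply: subgroup0.
Qed.

Lemma has_index_preimage m :
  is_subgroup K -> has_index K m -> exists d, has_index (fun x => K (phi x)) d.
Proof.
move=> subK [g /(coset_classifier subK) [c [cK _]]].
by eexists; apply: (@classifier_has_index _ _ _ (c \o phi)) => x y /=; rewrite cK phiB.
Qed.

Lemma has_index_preimage_bij (psi : W -> U) m :
  cancel psi phi -> has_index K m -> has_index (fun x => K (phi x)) m.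
Proof.
move=> psiK [g gP]; exists (psi \o g) => x.
have [i [Ki i_uniq]] := gP (phi x).
by exists i; split => [|j] /=; rewrite phiB psiK //; apply: i_uniq.
Qed.

End Preimage.

Lemma num_subgroups_of_index_iso (U W : zmodType) (phi : U -> W) (psi : W -> U) m N :
  cancel phi psi -> cancel psi phi -> {morph phi : x y / x - y} ->
  num_subgroups_of_index U m N -> num_subgroups_of_index W m N.
Proof.
move=> phiK psiK phiB [f [f_inj fP]].
have psiB : {morph psi : x y / x - y}.
  by move=> x y; apply: (can_inj phiK); rewrite phiB !psiK.
exists (fun i w => f i (psi w)); split.
  move=> i j eq_f; apply: f_inj; apply/funext => x.
  by have := congr1 (fun F => F (phi x)) eq_f; rewrite /= phiK.
move=> H; split => [[subH indexH] | [i <-]].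
  have [i fiH] : exists i, f i = (fun x => H (phi x)).
    by apply/fP; split; [apply: subgroup_preimage | apply: has_index_preimage_bij psiK _].
  by exists i; rewrite fiH; apply/funext => w /=; rewrite psiK.
have [subf indexf] : is_subgroup (f i) /\ has_index (f i) m by apply/fP; exists i.
by split; [apply: subgroup_preimage | apply: has_index_preimage_bij phiK _].
Qed.


Lemma pairD (U W : zmodType) (a c : U) (b d : W) : (a, b) + (c, d) = (a + c, b + d).
Proof. by []. Qed.

Lemma pairB (U W : zmodType) (a c : U) (b d : W) : (a, b) - (c, d) = (a - c, b - d).
Proof. by []. Qed.

Lemma pairMzE (U W : zmodType) (x : U * W) (z : int) : x *~ z = (x.1 *~ z, x.2 *~ z).
Proof. by case: z => n; rewrite ?NegzE ?mulrNz -!pmulrn pairMnE. Qed.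

Lemma divzB (d k k' : int) :
  (d %| k - k')%Z -> ((k - k') %/ d)%Z = (k %/ d)%Z - (k' %/ d)%Z.
Proof. by move=> d_dvd; rewrite -[k in RHS](subrK k') (divzDl _ d_dvd) addrK. Qed.

Lemma divn_dvd_gt0 m d : (0 < m)%N -> (d %| m)%N -> (0 < m %/ d)%N.
Proof.
by move=> m_gt0 d_dvd; rewrite divn_gt0 ?(dvdn_leq m_gt0 d_dvd) ?(dvdn_gt0 m_gt0 d_dvd).
Qed.

Section Adjoin.
Variable V : zmodType.

(* The subgroup (K x 0) + Z (w, e) of V x Z. *)
Definition adjoin (K : V -> Prop) (w : V) (e : nat) : V * int -> Prop :=
  fun x => (e%:Z %| x.2)%Z /\ K (x.1 - w *~ (x.2 %/ e%:Z)%Z).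

Lemma subr_mulrzB (a b w : V) (p q : int) :
  (a - b) - w *~ (p - q) = (a - w *~ p) - (b - w *~ q).
Proof. by rewrite mulrzBr !opprB !addrA addrAC [a - b + _]addrAC addrAC. Qed.

Lemma adjoin_slice K w e v : adjoin K w e (v, 0) <-> K v.
Proof.
rewrite /adjoin /= div0z mulr0z subr0.
by split => [[] // | Kv]; split => //; apply: dvdz0.
Qed.

Variables (K : V -> Prop) (e : nat).
Hypotheses (subK : is_subgroup K) (e_gt0 : (0 < e)%N).

Let e_neq0 : e%:Z != 0. Proof. by rewrite eqz_nat -lt0n. Qed.

Lemma adjoin_self w : adjoin K w e (w, e%:Z).
Proof.
split; first exact: dvdzz.
by rewrite /= divzz e_neq0 mulr1z subrr; apply: subgroup0.
Qed.

Lemma adjoin_subgroup w : is_subgroup (adjoin K w e).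
Proof.
split; first by split; [apply: dvdz0 | rewrite /= div0z mulr0z subr0; apply: subgroup0].
move=> [x1 x2] [y1 y2]; rewrite /adjoin /= => -[/dvdzP [qx ->] Kx] [/dvdzP [qy ->] Ky].
rewrite !mulzK // in Kx Ky; split; first by rewrite -mulrBl dvdz_mull.
by rewrite -mulrBl mulzK // subr_mulrzB; apply: subgroupB.
Qed.

Lemma eq_adjoin w w' : K (w - w') -> adjoin K w e = adjoin K w' e.
Proof.
move=> Kw; apply/funext => x; apply/propext; rewrite /adjoin.
split => -[e_dvd Kx]; split => //.
  have := subgroupD subK Kx (subgroupMz subK (x.2 %/ e%:Z)%Z Kw).
  by rewrite mulrzBl addrA subrK.
have := subgroupB subK Kx (subgroupMz subK (x.2 %/ e%:Z)%Z Kw).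
by rewrite mulrzBl opprB addrA subrK.
Qed.

Lemma absz_modz_lt (k : int) : (`|(k %% e%:Z)%Z|%N < e)%N.
Proof. by rewrite -ltz_nat gez0_abs ?modz_ge0 // ltz_pmod // ltz_nat. Qed.

Let residue (k : int) : 'I_e := Ordinal (absz_modz_lt k).

Lemma residue_eq k k' : residue k = residue k' <-> (e%:Z %| k - k')%Z.
Proof.
rewrite -eqz_mod_dvd; split => [/(congr1 (fun i : 'I_e => (i : nat)%:Z)) | /eqP eq_mod].
  by rewrite /= !gez0_abs ?modz_ge0 // => ->.
by apply: val_inj; rewrite /= eq_mod.
Qed.

Lemma residue_nat (j : 'I_e) : residue j%:Z = j.
Proof. by apply: val_inj; rewrite /= modz_small // lez_nat ltz_nat ltn_ord. Qed.

Lemma adjoin_index w d : has_index K d -> has_index (adjoin K w e) (d * e).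
Proof.
case=> gK /(coset_classifier subK) [cK [cKP gKK]].
pose c (x : V * int) := (cK (x.1 - w *~ (x.2 %/ e%:Z)%Z), residue x.2).
have cP : classifies (adjoin K w e) c.
  move=> [x1 x2] [y1 y2]; rewrite /c /adjoin /=.
  split => [/pair_equal_spec [/cKP Kxy /residue_eq e_dvd] | [e_dvd Kxy]].
    by rewrite divzB // subr_mulrzB.
  by congr pair; [apply/cKP; rewrite -subr_mulrzB -divzB | apply/residue_eq].
have := classifier_has_index cP.
suff -> : [set t | `[< exists x, c x = t >]] = setT by rewrite cardsT card_prod !card_ord.
apply/setP => -[i j]; rewrite !inE; apply/asboolP; exists (gK i, (j : nat)%:Z).
rewrite /c /= divz_small; last by rewrite ltz_nat ltn_ord.
by rewrite [w *~ _](_ : _ = 0) // subr0 gKK residue_nat.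
Qed.

End Adjoin.

Lemma adjoin_inj (V : zmodType) (K K' : V -> Prop) w w' e e' :
  (0 < e)%N -> (0 < e')%N -> is_subgroup K -> is_subgroup K' ->
  adjoin K w e = adjoin K' w' e' -> [/\ e = e', K = K' & K (w - w')].
Proof.
move=> e_gt0 e'_gt0 subK subK' eq_adjoin.
have /eqP eq_e : e == e'.
  have := adjoin_self subK e_gt0 w; rewrite eq_adjoin => -[e'_dvd _].
  have := adjoin_self subK' e'_gt0 w'; rewrite -eq_adjoin => -[e_dvd _].
  by rewrite eqn_dvd; apply/andP; split; [exact: e_dvd | exact: e'_dvd].
subst e'; have eq_K : K = K'.
  apply/funext => v; apply/propext.
  by rewrite -(adjoin_slice K w e) -(adjoin_slice K' w' e) eq_adjoin.
subst K'; split => //.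
have := adjoin_self subK e_gt0 w; rewrite eq_adjoin => -[_] /=.
by rewrite divzz eqz_nat -lt0n e_gt0 mulr1z.
Qed.

Lemma num_adjoin_cosets (V : zmodType) (K : V -> Prop) d e :
  is_subgroup K -> has_index K d -> (0 < e)%N ->
  num_sets (fun H => exists w, H = adjoin K w e) d.
Proof.
move=> subK [g gP] e_gt0; exists (fun i => adjoin K (g i) e); split.
  move=> i j /(adjoin_inj e_gt0 e_gt0 subK subK) [_ _].
  exact: (coset_reps_inj subK gP).
move=> H; split => [[w ->] | [i <-]]; last by exists (g i).
have [i [Kwi _]] := gP w; exists i; exact/esym/eq_adjoin.
Qed.

Section FiniteIndex.
Variables (V : zmodType) (H : V * int -> Prop) (m : nat).
Hypotheses (subH : is_subgroup H) (indexH : has_index H m).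

Let slice_morph : {morph (fun v : V => (v, 0 : int)) : x y / x - y}.
Proof. by move=> x y; rewrite pairB subr0. Qed.

Lemma subgroup_slice : is_subgroup (fun v => H (v, 0)).
Proof. exact: subgroup_preimage slice_morph subH. Qed.

(* Pigeonhole on the cosets of (0, 0), ..., (0, m). *)
Lemma has_index_vertical : exists2 k, (0 < k)%N & H (0, k%:Z).
Proof.
case: indexH => g /(coset_classifier subH) [c [cH _]].
have /injectivePn [i [j neq_ij c_ij]] : ~~ injectiveb (fun j : 'I_m.+1 => c (0, j%:Z)).
  by apply/negP => /injectiveP c_inj; have := leq_card _ c_inj; rewrite !card_ord ltnn.
pose z := i%:Z - j%:Z; have Hz : H (0, z).
  by rewrite -(subrr (0 : V)); exact: (cH (0, i%:Z) (0, j%:Z)).1 c_ij.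
exists `|z|%N; first by rewrite absz_gt0 subr_eq0 eqz_nat.
rewrite abszE; case: ger0P => _ //; rewrite -[0 : V]oppr0.
exact: (subgroupN (x := (0, z)) subH Hz).
Qed.

(* Take e the least positive height of H and (w, e) in H: the remainder modulo e
   of any height is again a height, hence 0. *)
Lemma subgroup_adjoin :
  exists2 e, (0 < e)%N & exists w, H = adjoin (fun v => H (v, 0)) w e.
Proof.
have [k k_gt0 Hk] := has_index_vertical.
have : exists k, (0 < k)%N && `[< exists v, H (v, k%:Z) >].
  by exists k; rewrite k_gt0; apply/asboolP; exists 0.
case/ex_minnP => e /andP [e_gt0 /asboolP [w Hw]] e_min.
have e_neq0 : e%:Z != 0 by rewrite eqz_nat -lt0n.
exists e => //; exists w; apply/funext => -[v k']; apply/propext; rewrite /adjoin /=.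
have Hwq q : H (w *~ q, e%:Z * q).
  by have := subgroupMz subH q Hw; rewrite pairMzE /= mulrzz.
split => [Hvk | [e_dvd Hv]]; last first.
  by have := subgroupD subH Hv (Hwq (k' %/ e%:Z)%Z); rewrite pairD subrK add0r mulrC divzK.
have := subgroupB subH Hvk (Hwq (k' %/ e%:Z)%Z).
rewrite pairB [e%:Z * _]mulrC [X in (_, X - _)](divz_eq k' e%:Z) addrAC subrr add0r.
have [r r_eq] : exists r : nat, (k' %% e%:Z)%Z = r%:Z.
  by exists `|(k' %% e%:Z)%Z|%N; rewrite gez0_abs // modz_ge0.
have r_lt : (r < e)%N by rewrite -ltz_nat -r_eq ltz_pmod // ltz_nat.
rewrite r_eq; case: (posnP r) => [r0 | r_gt0] Hr; last first.
  suff : (e <= r)%N by rewrite leqNgt r_lt.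
  by apply: e_min; rewrite r_gt0; apply/asboolP; eexists; apply: Hr.
by split; [apply/dvdz_mod0P; rewrite r_eq r0 | move: Hr; rewrite r0].
Qed.

Lemma subgroup_of_index_adjoin :
  exists d, [/\ (d %| m)%N, has_index (fun v => H (v, 0)) d &
               exists w, H = adjoin (fun v => H (v, 0)) w (m %/ d)].
Proof.
have [e e_gt0 [w H_adjoin]] := subgroup_adjoin.
have [d indexK] := has_index_preimage slice_morph subH indexH.
have de_eq : (d * e)%N = m.
  apply: (index_unique subH) indexH; rewrite H_adjoin.
  exact: adjoin_index subgroup_slice _ _ _ indexK.
have d_gt0 : (0 < d)%N.
  by rewrite lt0n; apply: contraPneq indexH => d0; rewrite -de_eq d0; apply: has_index0.
exists d; split => //; first by rewrite -de_eq dvdn_mulr.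
by exists w; rewrite -de_eq mulKn.
Qed.

End FiniteIndex.

Section CountProdInt.
Variables (V : zmodType) (N : nat -> nat).
Hypothesis countV : forall d, num_subgroups_of_index V d (N d).

Lemma num_adjoins_of_index m d : (0 < m)%N -> (d %| m)%N ->
  num_sets (fun H => exists2 K : V -> Prop, is_subgroup K /\ has_index K d &
                                exists w, H = adjoin K w (m %/ d)) (N d * d)%N.
Proof.
move=> m_gt0 d_dvd; have e_gt0 := divn_dvd_gt0 m_gt0 d_dvd.
apply: num_sets_bigcup (countV d) _ _ => [K [subK indexK] | K K' H [subK _] [subK' _]].
  exact: num_adjoin_cosets.
by move=> [w ->] [w'] /(adjoin_inj e_gt0 e_gt0 subK subK') [].
Qed.

Lemma num_subgroups_of_index_prod_int m :
  num_subgroups_of_index (V * int)%type m (\sum_(d < m.+1 | d %| m) d * N d)%N.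
Proof.
have [-> | m_gt0] := posnP m.
  rewrite big_mkcond big_ord1 /= mul0n.
  by apply: num_sets_empty => H [_ /has_index0].
have e_gt0 := divn_dvd_gt0 m_gt0.
pose P (d : 'I_m.+1) H := (d %| m)%N /\
  exists2 K : V -> Prop, is_subgroup K /\ has_index K d & exists w, H = adjoin K w (m %/ d).
have -> : (\sum_(d < m.+1 | d %| m) d * N d = \sum_(d < m.+1) if d %| m then N d * d else 0)%N.
  by rewrite big_mkcond; apply: eq_bigr => d _; case: ifP; rewrite // mulnC.
apply: (eq_num_sets _ (@num_sets_sigma _ _ P _ _ _)) => [H | d | d d' H].
- split => [[d [d_dvd [K [subK indexK] [w ->]]]] | [subH indexH]].
    split; first exact: adjoin_subgroup subK (e_gt0 _ d_dvd) w.
    rewrite -[X in has_index _ X](divnK d_dvd) mulnC.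
    exact: adjoin_index subK (e_gt0 _ d_dvd) w d indexK.
  have [d [d_dvd indexK [w H_eq]]] := subgroup_of_index_adjoin subH indexH.
  have d_lt : (d < m.+1)%N by rewrite ltnS (dvdn_leq m_gt0 d_dvd).
  exists (Ordinal d_lt); split => //; exists (fun v => H (v, 0)); last by exists w.
  by split => //; apply: subgroup_slice.
- rewrite /P; case: ifP => d_dvd; last by apply: num_sets_empty => H [].
  by apply: eq_num_sets (num_adjoins_of_index m_gt0 d_dvd) => H; split => [? | [_ ?]].
move=> [d_dvd [K [subK _] [w ->]]] [d'_dvd [K' [subK' _] [w']]].
case/(adjoin_inj (e_gt0 _ d_dvd) (e_gt0 _ d'_dvd) subK subK') => eq_e _ _.
by apply: ord_inj; rewrite -(mulKn d m_gt0) -(divnA _ d_dvd) eq_e divnA // mulKn.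
Qed.

End CountProdInt.

Section ProdRowInt.
Variable D : zmodType.

Lemma num_subgroups_of_index_prod_rV0 m N :
  num_subgroups_of_index D m N -> num_subgroups_of_index (D * 'rV[int]_0)%type m N.
Proof.
apply: (@num_subgroups_of_index_iso _ _ (fun d => (d, 0)) fst) => // [[d r] | x y].
  by rewrite [r]thinmx0.
by rewrite pairB subr0.
Qed.

Lemma num_subgroups_of_index_prod_rVS n m N :
  num_subgroups_of_index ((D * 'rV[int]_n) * int)%type m N ->
  num_subgroups_of_index (D * 'rV[int]_n.+1)%type m N.
Proof.
pose cons_rV (p : (D * 'rV[int]_n) * int) : (D * 'rV[int]_n.+1)%type :=
  (p.1.1, row_mx (const_mx p.2 : 'rV[int]_1) p.1.2).
pose uncons_rV (q : (D * 'rV[int]_n.+1)%type) : (D * 'rV[int]_n) * int :=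
  ((q.1, rsubmx (q.2 : 'rV[int]_(1 + n))), lsubmx (q.2 : 'rV[int]_(1 + n)) 0 0).
apply: (@num_subgroups_of_index_iso _ _ cons_rV uncons_rV).
- by move=> [[d r] k]; rewrite /cons_rV /uncons_rV /= row_mxKr row_mxKl mxE.
- move=> [d r]; rewrite /cons_rV /uncons_rV /=; congr pair.
  rewrite -[RHS](@hsubmxK _ 1 1 n r) (_ : const_mx _ = lsubmx (r : 'rV_(1 + n))) //.
  by apply/matrixP => i j; rewrite !ord1 mxE.
- move=> [[d1 r1] k1] [[d2 r2] k2]; rewrite /cons_rV /= pairB; congr pair.
  by apply/matrixP => i j; rewrite !mxE; case: splitP => l _; rewrite !mxE.
Qed.

Lemma num_subgroups_of_index_prod_rV (a : nat -> nat) :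
  (forall d, num_subgroups_of_index D d (a d)) ->
  forall n m, num_subgroups_of_index (D * 'rV[int]_n)%type m (divisor_chain_sum a n m).
Proof.
move=> countD; elim=> [|n IHn] m; first exact: num_subgroups_of_index_prod_rV0.
exact/num_subgroups_of_index_prod_rVS/num_subgroups_of_index_prod_int.
Qed.

End ProdRowInt.

Local Close Scope ring_scope.

Theorem proposition9p7 (D : finZmodType) (n : nat) (hn : (1 <= n)%N)
  (a : nat -> nat)
  (ha : forall d : nat, num_subgroups_of_index D d (a d))
  (m : nat) (hm : (1 <= m)%N) :
  num_subgroups_of_index (D * 'rV[int]_n)%type m (chain_sum a n m).
Proof. by rewrite chain_sumE //; apply: num_subgroups_of_index_prod_rV. Qed.
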